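(* Let $G$ be a group acting on a ring $A$ from the right, $a\mapsto a^g$, such that each map $a\mapsto a^g$ is a ring automorphism. (a) For all $a,b\in A$ and $g\in G$: $[D^1(ab)](g)=a^g\cdot[D^1b](g)+[D^1a](g)\cdot b$. (b) Let $m,n\in\mathbb Z_+$ with $m+n\ge1$. If $a,b\in A$ satisfy $D^ma=0$ and $D^nb=0$, then $D^{m+n-1}(ab)=0$. Equivalently, $ab\in\mathcal P_{m+n}(G,A)$ whenever $a\in\mathcal P_m(G,A)$ and $b\in\mathcal P_n(G,A)$. In particular, the set $\mathcal P(G,A)=\bigcup_{n\ge0}\mathcal P_n(G,A)$ of all polynomial-like elements is a subring of $A$. (c) For each $n\in\mathbb N$, $D^n$ is $A^G$-linear: if $a\in A^G$ then $D^n(ab)=a\,D^nb$ for all $b\in A$.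
   Context: Right action: $a^{\mathbf e}=a$, $(a^g)^h=a^{gh}$, $\mathbf e$ the identity of $G$. $A^G=\{a:a^g=a\ \forall g\}$. $\mathcal C^0(G,A)=A$; for $n\ge1$, $\mathcal C^n(G,A)$ is the set of functions $G^n\to A$ vanishing whenever some argument is $\mathbf e$ (with pointwise operations, and $a\cdot c$ defined pointwise for $a\in A$). For $n\ge1$, $(d_nc)(g_1,\dots,g_n)=[c(g_1,\dots,g_{n-1})]^{g_n}-c(g_1,\dots,g_{n-1})$; $D^0=\mathrm{id}_A$, $D^n=d_nD^{n-1}$; $\mathcal P_n(G,A)=\ker D^{n+1}$. *)

From HB Require Import structures.
From mathcomp Require Import all_boot all_order all_algebra.
Set Implicit Arguments. Unset Strict Implicit. Unset Printing Implicit Defensive.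
Import GRing.Theory.
Local Open Scope ring_scope.

Record group_law (G : Type) (mul : G -> G -> G) (e : G) (inv : G -> G) : Prop := {
  gmulA : forall x y z, mul x (mul y z) = mul (mul x y) z;
  gmul1 : forall x, mul e x = x;
  gmulr1 : forall x, mul x e = x;
  gmulV : forall x, mul (inv x) x = e;
  gmulrV : forall x, mul x (inv x) = e }.

Record right_ring_action (G : Type) (mul : G -> G -> G) (e : G)
    (A : pzRingType) (act : A -> G -> A) : Prop := {
  act1 : forall a, act a e = a;
  actM : forall a g h, act (act a g) h = act a (mul g h);
  actD : forall a b g, act (a + b) g = act a g + act b g;
  actN : forall a g, act (- a) g = - act a g;
  actMr : forall a b g, act (a * b) g = act a g * act b g;
  actU : forall g, act 1 g = 1;
  act_bij : forall g, bijective (act^~ g) }.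

(* D^n a : G^n -> A, with G^n represented as 'I_n -> G.
   D^0 a = a (constant on the one-point set G^0),
   (D^(n+1) a)(g_1..g_(n+1)) = (D^n a (g_1..g_n))^(g_(n+1)) - D^n a (g_1..g_n). *)
Fixpoint Dop (G : Type) (A : pzRingType) (act : A -> G -> A) (n : nat)
    (a : A) : ('I_n -> G) -> A :=
  match n return ('I_n -> G) -> A with
  | 0 => fun _ => a
  | m.+1 => fun g =>
      let c := @Dop G A act m a (fun i : 'I_m => g (widen_ord (leqnSn m) i)) in
      act c (g ord_max) - c
  end.
Arguments Dop {G A} act n a _.

Definition Dzero (G : Type) (A : pzRingType) (act : A -> G -> A) (n : nat)
    (a : A) : Prop := forall g : 'I_n -> G, Dop act n a g = 0.

Definition Pn (G : Type) (A : pzRingType) (act : A -> G -> A) (n : nat) (a : A) : Prop :=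
  Dzero act n.+1 a.

Definition Ppoly (G : Type) (A : pzRingType) (act : A -> G -> A) (a : A) : Prop :=
  exists n, Pn act n a.

Definition Ainv (G : Type) (A : pzRingType) (act : A -> G -> A) (a : A) : Prop :=
  forall g, act a g = a.
Arguments Dzero {G A} act n a.
Arguments Pn {G A} act n a.
Arguments Ppoly {G A} act a.
Arguments Ainv {G A} act a.

From HB Require Import structures.
From mathcomp Require Import all_boot all_order all_algebra.
Import GRing.Theory.
Local Open Scope ring_scope.

(* D^n applies the difference c |-> c^g - c once for each argument g_1, ..., g_n,
   so D^n a = 0 means that these differences, applied along any word of length n
   in G, kill a.  Reading such words from the front, D^(k+1) c = 0 iff
   D^k (c^g - c) = 0 for every g.  Combined with the Leibniz rule
   (ab)^g - ab = a^g (b^g - b) + (a^g - a) b and the fact that ker D^k is an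
   additive subgroup stable under the action, this gives (b) by induction on
   m + n. *)

Section IteratedDifference.

Context {G : Type} {A : pzRingType} {act : A -> G -> A}.

Fixpoint Dseq (s : seq G) (c : A) : A :=
  if s is g :: s' then Dseq s' (act c g - c) else c.

Lemma Dseq_cat s t c : Dseq (s ++ t) c = Dseq t (Dseq s c).
Proof. by elim: s c => [|g s IHs] c //=. Qed.

Lemma Dseq_rcons s g c : Dseq (rcons s g) c = act (Dseq s c) g - Dseq s c.
Proof. by rewrite -cats1 Dseq_cat. Qed.

(* Dop peels off its last argument, Dseq its first one. *)
Lemma Dop_Dseq n c (g : 'I_n -> G) : Dop act n c g = Dseq (map g (enum 'I_n)) c.
Proof.
elim: n g => [|n IHn] g /=; first by rewrite enum_ord0.
by rewrite IHn enum_ordSr map_rcons Dseq_rcons -map_comp.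
Qed.

Definition Dnull (k : nat) (c : A) : Prop :=
  forall s : seq G, size s = k -> Dseq s c = 0.

Lemma Dzero_Dnull n c : Dzero act n c <-> Dnull n c.
Proof.
split=> [c_null s size_s | c_null g]; last first.
  by rewrite Dop_Dseq c_null // size_map size_enum_ord.
have s_tuple : size s == n by apply/eqP.
by have := c_null (tnth (Tuple s_tuple)); rewrite Dop_Dseq map_tnth_enum.
Qed.

Lemma Dnull_order0 c : Dnull 0 c <-> c = 0.
Proof. by split=> [c_null | -> [] //]; apply: (c_null [::]). Qed.

Lemma DnullS k c : Dnull k.+1 c <-> forall g, Dnull k (act c g - c).
Proof.
split=> [c_null g s size_s | c_null [|g s] //= [size_s]]; last exact: c_null.
by apply: (c_null (g :: s)); rewrite /= size_s.
Qed.

Hypothesis act_add : forall a b g, act (a + b) g = act a g + act b g.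

Lemma DseqD s a b : Dseq s (a + b) = Dseq s a + Dseq s b.
Proof.
elim: s a b => [|g s IHs] a b //=.
by rewrite -IHs act_add opprD addrACA.
Qed.

Lemma Dseq0 s : Dseq s 0 = 0.
Proof. by apply: (@addrI _ (Dseq s 0)); rewrite -DseqD !addr0. Qed.

Lemma DseqN s a : Dseq s (- a) = - Dseq s a.
Proof. by apply/eqP; rewrite -addr_eq0 -DseqD addNr Dseq0. Qed.

Lemma Dnull0 k : Dnull k 0.
Proof. by move=> s _; apply: Dseq0. Qed.

Lemma DnullD k a b : Dnull k a -> Dnull k b -> Dnull k (a + b).
Proof. by move=> a_null b_null s size_s; rewrite DseqD a_null ?b_null ?addr0. Qed.

Lemma DnullB {k a b} : Dnull k a -> Dnull k b -> Dnull k (a - b).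
Proof.
by move=> a_null b_null s size_s; rewrite DseqD DseqN a_null ?b_null ?subr0.
Qed.

Lemma Dnull_mono {k j c} : (k <= j)%N -> Dnull k c -> Dnull j c.
Proof.
move=> le_kj c_null s size_s.
by rewrite -(cat_take_drop k s) Dseq_cat c_null ?Dseq0 // size_takel ?size_s.
Qed.

Lemma Dnull_act k a g : Dnull k a -> Dnull k (act a g).
Proof.
case: k => [|k] a_null.
  have act0 : act 0 g = 0 by apply: (@addrI _ (act 0 g)); rewrite -act_add !addr0.
  by move/Dnull_order0: a_null => ->; rewrite act0; apply: Dnull0.
rewrite -(subrK a (act a g)); apply: DnullD => //.
by apply: (Dnull_mono (leqnSn k)); move/DnullS: a_null; apply.
Qed.

Hypothesis act_mul : forall a b g, act (a * b) g = act a g * act b g.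

Lemma act_subM a b g :
  act (a * b) g - a * b = act a g * (act b g - b) + (act a g - a) * b.
Proof. by rewrite act_mul mulrBr mulrBl addrA subrK. Qed.

Lemma Dnull_mul {m n a b} : Dnull m a -> Dnull n b -> Dnull (m + n).-1 (a * b).
Proof.
have [k] := ubnP (m + n); elim: k m n a b => // k IHk m n a b lt_mn_k.
case: m lt_mn_k => [|m] lt_mn_k a_null.
  by move/Dnull_order0: a_null => -> _; rewrite mul0r; apply: Dnull0.
case: n lt_mn_k => [|n] lt_mn_k b_null.
  by move/Dnull_order0: b_null => ->; rewrite mulr0; apply: Dnull0.
rewrite addSn addnS /=; apply/DnullS => g; rewrite act_subM.
apply: DnullD.
  apply: (IHk m.+1 n); first by rewrite addSn -ltnS -addnS.
    exact: Dnull_act.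
  by move/DnullS: b_null; apply.
rewrite -[(m + n)%N]/(m + n).+1.-1 -addnS.
apply: (IHk m n.+1); first by rewrite -ltnS -addSn.
  by move/DnullS: a_null; apply.
exact: b_null.
Qed.

Lemma Dop_mul_invariant a : Ainv act a ->
  forall n b (g : 'I_n -> G), Dop act n (a * b) g = a * Dop act n b g.
Proof.
move=> a_inv n b; elim: n => [|n IHn] g //=.
by rewrite IHn act_mul a_inv mulrBr.
Qed.

End IteratedDifference.

Arguments Dseq {G A} act s c.
Arguments Dnull {G A} act k c.

Theorem proposition2p1 (G : Type) (mul : G -> G -> G) (e : G) (inv : G -> G)
    (A : pzRingType) (act : A -> G -> A)
    (HG : group_law mul e inv) (Hact : right_ring_action mul e act) :
  (* (a) *)
  (forall (a b : A) (g : G),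
      Dop act 1 (a * b) (fun _ => g)
      = act a g * Dop act 1 b (fun _ => g) + Dop act 1 a (fun _ => g) * b) /\
  (* (b) *)
  (forall (m n : nat) (a b : A), (1 <= m + n)%N ->
      Dzero act m a -> Dzero act n b -> Dzero act (m + n - 1) (a * b)) /\
  (forall (m n : nat) (a b : A), Pn act m a -> Pn act n b -> Pn act (m + n) (a * b)) /\
  (* P(G,A) is a subring *)
  (Ppoly act 1 /\
   (forall a b : A, Ppoly act a -> Ppoly act b -> Ppoly act (a - b)) /\
   (forall a b : A, Ppoly act a -> Ppoly act b -> Ppoly act (a * b))) /\
  (* (c) *)
  (forall (n : nat) (a : A), Ainv act a ->
      forall (b : A) (g : 'I_n -> G), Dop act n (a * b) g = a * Dop act n b g).
Proof.
have act_add := actD Hact; have act_mul := actMr Hact.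
have Pn_mul m n a b : Pn act m a -> Pn act n b -> Pn act (m + n) (a * b).
  move=> /Dzero_Dnull a_null /Dzero_Dnull b_null; apply/Dzero_Dnull.
  by have := Dnull_mul act_add act_mul a_null b_null; rewrite addSn addnS.
split; first by move=> a b g /=; apply: act_subM.
split.
  move=> m n a b _ /Dzero_Dnull a_null /Dzero_Dnull b_null; apply/Dzero_Dnull.
  by rewrite subn1; apply: Dnull_mul.
split; first exact: Pn_mul.
split; last by move=> n a /(Dop_mul_invariant act_mul).
split; first by exists 0%N => g /=; rewrite (actU Hact) subrr.
split; last by move=> a b [m Pa] [n Pb]; exists (m + n)%N; apply: Pn_mul.
move=> a b [m /Dzero_Dnull a_null] [n /Dzero_Dnull b_null].
exists (maxn m n); apply/Dzero_Dnull/(DnullB act_add).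
  by apply: (Dnull_mono act_add _ a_null); rewrite ltnS leq_maxl.
by apply: (Dnull_mono act_add _ b_null); rewrite ltnS leq_maxr.
Qed.
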